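(* Let $(\mathcal{C},\mathbb{E},\mathfrak{s})$ satisfy (ET1) and (ET2), and let $\mathcal{I}$ be a special precovering ideal of $\mathcal{C}$. If $\mathcal{I}^{\perp_{\mathbb{E}}}$ is an object ideal, then $\mathcal{I}$ is an object-special precovering ideal.
   Context: $\mathcal{C}$ additive, $\mathbb{E}:\mathcal{C}^{\mathrm{op}}\times\mathcal{C}\to\mathrm{Ab}$ biadditive (ET1); for $\delta\in\mathbb{E}(C,A)$, $a:A\to A'$, $c:C'\to C$ put $a_\star\delta=\mathbb{E}(C,a)(\delta)$, $c^\star\delta=\mathbb{E}(c,A)(\delta)$. (ET2): $\mathfrak{s}$ is an additive realization (Nakaoka–Palu): each $\delta\in\mathbb{E}(C,A)$ is assigned an equivalence class of sequences $A\to B\to C$ (up to isomorphism of middle terms), $0$ is realized by split sequences, realization respects direct sums, and if $a_\star\delta=c^\star\delta'$ there is a middle map making the realizing sequences commute. Realized pairs are $\mathbb{E}$-triangles $A\to B\to C\overset{\delta}{\dashrightarrow}$; commuting triples $(a,b,c)$ with $a_\star\delta=c^\star\delta'$ are morphisms of $\mathbb{E}$-triangles. Ideal: class of morphisms with zeros, closed under sums and two-sided composition. $\mathcal{I}^{\perp_{\mathbb{E}}}=\{g:A\to Y\mid m^\star g_\star\delta=0\ \forall m\in\mathcal{I},\,m:X\to C,\ \forall\delta\in\mathbb{E}(C,A)\}$. For a class $\mathcal{K}$ of morphisms, $\mathrm{Ob}(\mathcal{K})=\{A\mid \mathrm{id}_A\in\mathcal{K}\}$ and $\langle\mathcal{K}\rangle$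 is the smallest ideal containing $\mathcal{K}$; $\mathcal{K}$ is an object ideal if $\mathcal{K}=\langle\mathrm{Ob}(\mathcal{K})\rangle$ (i.e. it consists of the morphisms factoring through objects of $\mathrm{Ob}(\mathcal{K})$); write $A\in\mathcal{K}$ for $A\in\mathrm{Ob}(\mathcal{K})$. A special $\mathcal{I}$-precover of $C$: $i:X\to C$ in $\mathcal{I}$ with $\mathbb{E}$-triangles $A\to B\to C\overset{\delta}{\dashrightarrow}$, $A'\to X\xrightarrow{i}C\overset{\delta'}{\dashrightarrow}$ and a morphism $(j,b,\mathrm{id}_C)$ between them, $j\in\mathcal{I}^{\perp_{\mathbb{E}}}$; $\mathcal{I}$ is special precovering if every object has one. An object-special $\mathcal{I}$-precover of $C$: $i:X\to C$ in $\mathcal{I}$ for which there is an $\mathbb{E}$-triangle $A\to X\xrightarrow{i}C\overset{\delta}{\dashrightarrow}$ with $A\in\mathcal{I}^{\perp_{\mathbb{E}}}$; $\mathcal{I}$ is object-special precovering if every object has one. *)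

From mathcomp Require Import all_boot all_algebra.
Set Implicit Arguments.
Unset Strict Implicit.
Unset Printing Implicit Defensive.
Import GRing.Theory.
Local Open Scope ring_scope.

Record AddCat := {
  ob : Type;
  hom : ob -> ob -> zmodType;
  comp : forall A B C, hom B C -> hom A B -> hom A C;   (* comp g f = g o f *)
  idm : forall A, hom A A;
  compA : forall A B C D (h : hom C D) (g : hom B C) (f : hom A B),
      comp h (comp g f) = comp (comp h g) f;
  comp1m : forall A B (f : hom A B), comp (idm B) f = f;
  compm1 : forall A B (f : hom A B), comp f (idm A) = f;
  compDl : forall A B C (g1 g2 : hom B C) (f : hom A B),
      comp (g1 + g2) f = comp g1 f + comp g2 f;
  compDr : forall A B C (g : hom B C) (f1 f2 : hom A B),
      comp g (f1 + f2) = comp g f1 + comp g f2;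
  zob : ob;
  zob_initial : forall A (f : hom zob A), f = 0;
  zob_terminal : forall A (f : hom A zob), f = 0;
  bp : ob -> ob -> ob;
  bp_i1 : forall A B, hom A (bp A B);
  bp_i2 : forall A B, hom B (bp A B);
  bp_p1 : forall A B, hom (bp A B) A;
  bp_p2 : forall A B, hom (bp A B) B;
  bp_p1i1 : forall A B, comp (bp_p1 A B) (bp_i1 A B) = idm A;
  bp_p2i2 : forall A B, comp (bp_p2 A B) (bp_i2 A B) = idm B;
  bp_p1i2 : forall A B, comp (bp_p1 A B) (bp_i2 A B) = 0;
  bp_p2i1 : forall A B, comp (bp_p2 A B) (bp_i1 A B) = 0;
  bp_sum : forall A B, comp (bp_i1 A B) (bp_p1 A B) + comp (bp_i2 A B) (bp_p2 A B)
                       = idm (bp A B)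
}.

Arguments comp {_ _ _ _}.
Arguments idm {_}.
Arguments bp {_}.
Arguments bp_i1 {_}. Arguments bp_i2 {_}. Arguments bp_p1 {_}. Arguments bp_p2 {_}.

Section Defs.
Variable CC : AddCat.
Local Notation ob := (ob CC).
Local Notation hom := (@hom CC).

Definition dsum_mor A A' B B' (f : hom A B) (g : hom A' B') : hom (bp A A') (bp B B') :=
  comp (bp_i1 B B') (comp f (bp_p1 A A')) + comp (bp_i2 B B') (comp g (bp_p2 A A')).

Definition is_iso A B (b : hom A B) : Prop :=
  exists b' : hom B A, comp b' b = idm A /\ comp b b' = idm B.

Definition seq_equiv A C B (x : hom A B) (y : hom B C) B' (x' : hom A B') (y' : hom B' C)
  : Prop :=
  exists b : hom B B', is_iso b /\ comp b x = x' /\ comp y' b = y.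
End Defs.

(* (ET1): a biadditive functor E : C^op x C -> Ab.
   mapE c a : E(C,A) -> E(C',A')  for c : C' -> C and a : A -> A'.
   (ET2): an additive realization s (Nakaoka--Palu).
   s d B x y  means: A -x-> B -y-> C  is in the class s(d), d in E(C,A). *)
Record ExtTriCat (CC : AddCat) := {
  Ext : ob CC -> ob CC -> zmodType;
  mapE : forall C C' A A', hom C' C -> hom A A' -> Ext C A -> Ext C' A';
  mapE_additive : forall C C' A A' (c : hom C' C) (a : hom A A') (d1 d2 : Ext C A),
      mapE c a (d1 + d2) = mapE c a d1 + mapE c a d2;
  mapE_id : forall C A (d : Ext C A), mapE (idm C) (idm A) d = d;
  mapE_comp : forall C C' C'' A A' A'' (c : hom C' C) (c' : hom C'' C')
                     (a : hom A A') (a' : hom A' A'') (d : Ext C A),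
      mapE (comp c c') (comp a' a) d = mapE c' a' (mapE c a d);
  mapE_addl : forall C C' A A' (c1 c2 : hom C' C) (a : hom A A') (d : Ext C A),
      mapE (c1 + c2) a d = mapE c1 a d + mapE c2 a d;
  mapE_addr : forall C C' A A' (c : hom C' C) (a1 a2 : hom A A') (d : Ext C A),
      mapE c (a1 + a2) d = mapE c a1 d + mapE c a2 d;
  real : forall C A, Ext C A -> forall B, hom A B -> hom B C -> Prop;
  real_nonempty : forall C A (d : Ext C A), exists B (x : hom A B) (y : hom B C), real d x y;
  real_class : forall C A (d : Ext C A) B (x : hom A B) (y : hom B C)
                      B' (x' : hom A B') (y' : hom B' C),
      real d x y -> (real d x' y' <-> seq_equiv x y x' y');
  real_morph : forall C A C' A' (d : Ext C A) (d' : Ext C' A')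
                      (a : hom A A') (c : hom C C')
                      B (x : hom A B) (y : hom B C) B' (x' : hom A' B') (y' : hom B' C'),
      mapE (idm C) a d = mapE c (idm A') d' ->
      real d x y -> real d' x' y' ->
      exists b : hom B B', comp b x = comp x' a /\ comp c y = comp y' b;
  real_zero : forall C A, real (0 : Ext C A) (bp_i1 A C) (bp_p2 A C);
  real_dsum : forall C A C' A' (d : Ext C A) (d' : Ext C' A')
                     B (x : hom A B) (y : hom B C) B' (x' : hom A' B') (y' : hom B' C'),
      real d x y -> real d' x' y' ->
      real (mapE (bp_p1 C C') (bp_i1 A A') d + mapE (bp_p2 C C') (bp_i2 A A') d')
           (dsum_mor x x') (dsum_mor y y')
}.

Arguments mapE {_ _ _ _ _ _}.
Arguments real {_ _ _ _} d {B} x y.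

Section Ideals.
Variables (CC : AddCat) (ET : ExtTriCat CC).
Local Notation hom := (@hom CC).

Definition pushE C A A' (a : hom A A') (d : Ext ET C A) : Ext ET C A' := mapE (idm C) a d.
Definition pullE C C' A (c : hom C' C) (d : Ext ET C A) : Ext ET C' A := mapE c (idm A) d.

Definition Etriangle C A B (x : hom A B) (y : hom B C) (d : Ext ET C A) : Prop := real d x y.

Definition Etri_morph C A B (x : hom A B) (y : hom B C) (d : Ext ET C A)
                      C' A' B' (x' : hom A' B') (y' : hom B' C') (d' : Ext ET C' A')
                      (a : hom A A') (b : hom B B') (c : hom C C') : Prop :=
  comp b x = comp x' a /\ comp c y = comp y' b /\ pushE a d = pullE c d'.

Definition morclass := forall A B, hom A B -> Prop.

Definition is_ideal (I : morclass) : Prop :=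
  (forall A B, I A B 0) /\
  (forall A B (f g : hom A B), I A B f -> I A B g -> I A B (f + g)) /\
  (forall A B C D (h : hom C D) (f : hom B C) (g : hom A B),
      I B C f -> I A D (comp h (comp f g))).

Definition perpE (I : morclass) : morclass :=
  fun A Y (g : hom A Y) =>
    forall X C (m : hom X C), I X C m ->
      forall d : Ext ET C A, pullE m (pushE g d) = 0.

Definition Ob_of (K : morclass) (A : ob CC) : Prop := K A A (idm A).

Definition gen_ideal (K : morclass) : morclass :=
  fun A B f => forall J : morclass, is_ideal J -> (forall A' B' g, K A' B' g -> J A' B' g) ->
                J A B f.

Definition ids_of (P : ob CC -> Prop) : morclass :=
  fun A B f => exists (e : A = B), P A /\ f = eq_rect A (fun B => hom A B) (idm A) B e.

Definition object_ideal (K : morclass) : Prop :=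
  forall A B (f : hom A B), K A B f <-> gen_ideal (ids_of (Ob_of K)) f.

Definition special_precover (I : morclass) (C : ob CC) X (i : hom X C) : Prop :=
  I X C i /\
  exists A B (x : hom A B) (y : hom B C) (d : Ext ET C A)
         A' (x' : hom A' X) (d' : Ext ET C A') (j : hom A A') (b : hom B X),
    Etriangle x y d /\ Etriangle x' i d' /\
    Etri_morph x y d x' i d' j b (idm C) /\ perpE I j.

Definition special_precovering (I : morclass) : Prop :=
  forall C, exists X (i : hom X C), special_precover I i.

Definition object_special_precover (I : morclass) (C : ob CC) X (i : hom X C) : Prop :=
  I X C i /\
  exists A (x : hom A X) (d : Ext ET C A),
    Etriangle x i d /\ Ob_of (perpE I) A.

Definition object_special_precovering (I : morclass) : Prop :=
  forall C, exists X (i : hom X C), object_special_precover I i.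
End Ideals.

(** Write the special precover of [C] as a morphism [(j, b, 1)] from [A -> B -> C]
    (class [d]) to [A' -> X -i-> C] (class [j_* d]) with [j] in the right
    perpendicular of [I].  As that perpendicular is an object ideal, [j] factors as
    [A -u-> W -v-> A'] with [W] in it.  Realize [u_* d] as [W -> X' -i'-> C]; since
    [v_* (u_* d) = j_* d], the realization axiom gives [b' : X' -> X] with
    [i' = i b'], so [i'] lies in [I] and is an object-special precover. *)
From Pilot Require Import Defs.
From mathcomp Require Import all_boot all_algebra.
Set Implicit Arguments.
Unset Strict Implicit.
Import GRing.Theory.
Local Open Scope ring_scope.
Local Notation comp := Defs.comp.
Local Notation compA := Defs.compA.

Section Ideals.
Variable CC : AddCat.
Local Notation hom := (@Defs.hom CC).
Local Notation ob := (Defs.ob CC).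

Lemma compm0 A B C (g : hom B C) : comp g (0 : hom A B) = 0.
Proof. by apply: (addrI (comp g 0)); rewrite -compDr !addr0. Qed.

Lemma comp0m A B C (f : hom A B) : comp (0 : hom B C) f = 0.
Proof. by apply: (addrI (comp 0 f)); rewrite -compDl !addr0. Qed.

Lemma ideal_compr (K : morclass CC) A B C (f : hom B C) (g : hom A B) :
  is_ideal K -> K B C f -> K A C (comp f g).
Proof. by move=> [_ [_ KC]] Kf; rewrite -[comp f g]comp1m; apply: KC. Qed.

Lemma Ob_of_zob (K : morclass CC) : is_ideal K -> Ob_of K (zob CC).
Proof. by move=> [K0 _]; rewrite /Ob_of (zob_terminal (idm _)). Qed.

Lemma Ob_of_bp (K : morclass CC) W1 W2 :
  is_ideal K -> Ob_of K W1 -> Ob_of K W2 -> Ob_of K (bp W1 W2).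
Proof.
move=> [_ [KD KC]] K1 K2.
rewrite /Ob_of -bp_sum -[bp_p1 W1 W2]comp1m -[bp_p2 W1 W2]comp1m.
by apply: KD; apply: KC.
Qed.

Definition factors_through (P : ob -> Prop) : morclass CC :=
  fun A B f => exists W (u : hom A W) (v : hom W B), P W /\ f = comp v u.

Lemma factors_through_ideal (P : ob -> Prop) :
  P (zob CC) -> (forall W1 W2, P W1 -> P W2 -> P (bp W1 W2)) ->
  is_ideal (factors_through P).
Proof.
move=> P0 Pbp; split; [|split].
- by move=> A B; exists (zob CC), 0, 0; rewrite compm0.
- move=> A B _ _ [W1 [u1 [v1 [P1 ->]]]] [W2 [u2 [v2 [P2 ->]]]].
  exists (bp W1 W2), (comp (bp_i1 W1 W2) u1 + comp (bp_i2 W1 W2) u2),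
         (comp v1 (bp_p1 W1 W2) + comp v2 (bp_p2 W1 W2)); split; first exact: Pbp.
  rewrite compDl !compDr -!compA !(compA (bp_p1 W1 W2)) !(compA (bp_p2 W1 W2)).
  by rewrite bp_p1i1 bp_p1i2 bp_p2i1 bp_p2i2 !comp0m !compm0 !comp1m addr0 add0r.
- move=> A B C D h _ g [W [u [v [PW ->]]]].
  by exists W, (comp u g), (comp h v); rewrite !compA.
Qed.

Lemma gen_ideal_ideal (K : morclass CC) : is_ideal (gen_ideal K).
Proof.
split; [|split].
- by move=> A B J [J0 _] _.
- move=> A B f g Kf Kg J idJ KJ; case: (idJ) => _ [JD _].
  by apply: JD; [apply: Kf | apply: Kg].
- move=> A B C D h f g Kf J idJ KJ; case: (idJ) => _ [_ JC].
  by apply: JC; apply: Kf.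
Qed.

Lemma object_ideal_ideal (K : morclass CC) : object_ideal K -> is_ideal K.
Proof.
move=> objK; have [G0 [GD GC]] := gen_ideal_ideal (ids_of (Ob_of K)).
split; [|split].
- by move=> A B; apply/objK.
- by move=> A B f g /objK Kf /objK Kg; apply/objK; apply: GD.
- by move=> A B C D h f g /objK Kf; apply/objK; apply: GC.
Qed.

Lemma object_idealP (K : morclass CC) A B (f : hom A B) :
  object_ideal K -> K A B f -> factors_through (Ob_of K) f.
Proof.
move=> objK /objK; apply.
  have idK := object_ideal_ideal objK.
  by apply: factors_through_ideal; [exact: Ob_of_zob | move=> W1 W2; exact: Ob_of_bp].
move=> W W' _ [e [KW ->]]; case: W' / e.
by exists W, (idm W), (idm W); rewrite comp1m.
Qed.

End Ideals.

Section Realization.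
Variables (CC : AddCat) (ET : ExtTriCat CC).
Local Notation hom := (@Defs.hom CC).

Lemma pushE_comp C A W A' (u : hom A W) (v : hom W A') (d : Ext ET C A) :
  pushE (comp v u) d = pushE v (pushE u d).
Proof. by rewrite /pushE -mapE_comp comp1m. Qed.

Lemma realization_pushE_factors C W A' (e : Ext ET C W) (v : hom W A')
    (d : Ext ET C A') X (x : hom A' X) (i : hom X C) X' (x' : hom W X') (i' : hom X' C) :
  pushE v e = pullE (idm C) d -> real e x' i' -> real d x i ->
  exists b : hom X' X, i' = comp i b.
Proof.
move=> ved Te Td; have [b [_ ib]] := real_morph ved Te Td.
by exists b; rewrite -ib comp1m.
Qed.

End Realization.

Theorem proposition5p2 (CC : AddCat) (ET : ExtTriCat CC) (I : morclass CC) :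
  is_ideal I -> special_precovering ET I -> object_ideal (perpE ET I) ->
  object_special_precovering ET I.
Proof.
move=> idI spI objP C.
have [X [i [Ii [A [B [x [y [d [A' [x' [d' [j [b
  [_ [Td' [[_ [_ jd]] Pj]]]]]]]]]]]]]]]] := spI C.
have [W [u [v [PW Ej]]]] := object_idealP objP Pj.
have [X' [x'' [i' Tud]]] := real_nonempty (pushE (ET:=ET) u d).
rewrite Ej pushE_comp in jd.
have [b' ib'] := realization_pushE_factors jd Tud Td'.
exists X', i'; split; first by rewrite ib'; exact: ideal_compr.
by exists W, x'', (pushE u d).
Qed.
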